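(* Let $\Gamma$ be a discrete group and $X$ a compact $\Gamma$-space. The following are germinal representations of $(\Gamma,X)$: (i) the pair $(\kappa_\nu,\rho)$, where $\nu$ is a $\sigma$-finite quasi-invariant measure on $X$, $\kappa_\nu$ is the Koopman representation on $L^2(X,\nu)$, and $\rho\colon C(X)\to B(L^2(X,\nu))$ is the representation by multiplication operators; (ii) the pair $(\lambda_{\Gamma/H},\mathcal P_x)$, where $x\in X$, $H$ is a subgroup with $\Gamma_x^0\le H\le\Gamma_x$, and $\mathcal P_x\colon C(X)\to B(\ell^2(\Gamma/H))$ is the Poisson map.
   Context: A compact $\Gamma$-space is a compact Hausdorff space with a $\Gamma$-action by homeomorphisms; $\Gamma$ acts on $C(X)$ by $(gf)(x)=f(g^{-1}x)$; $X^g=\{x:gx=x\}$; $\Gamma_x=\{g:gx=x\}$, $\Gamma_x^0=\{g:g\text{ fixes pointwise an open neighborhood of }x\}$. A germinal representation of $(\Gamma,X)$ is a pair $(\pi,\rho)$ with $\pi$ a unitary representation on $\mathcal H_\pi$ and $\rho\colon C(X)\to B(\mathcal H_\pi)$ a unital $*$-homomorphism with $\rho(gf)=\pi(g)\rho(f)\pi(g)^*$, such that $\pi(g)\rho(f)=\rho(f)$ for all $g\in\Gamma$ and $f\in C(X)$ with $\operatorname{supp}f\subseteq X^g$. The Koopman representation is $\kappa_\nu(g)\xi(y)=\big(\tfrac{dg\nu}{d\nu}(y)\big)^{1/2}\xi(g^{-1}y)$. $\lambda_{\Gamma/H}$ is the quasi-regular representation on $\ell^2(\Gamma/H)$, and $\mathcal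 P_x(f)$ is multiplication by the function $gH\mapsto f(gx)$ (well defined since $H\le\Gamma_x$). *)

From HB Require Import structures.
From mathcomp Require Import all_boot all_order all_algebra monoid.
From mathcomp Require Import all_classical all_reals all_analysis.
From mathcomp Require Import complex.
Import numFieldNormedType.Exports.

Set Implicit Arguments.
Unset Strict Implicit.
Unset Printing Implicit Defensive.
Import Order.TTheory GRing.Theory Num.Theory.

Local Open Scope classical_set_scope.
Local Open Scope ring_scope.
Local Open Scope complex_scope.

Definition discr (T : pointedType) : Type := T.
HB.instance Definition _ (T : pointedType) := Pointed.on (discr T).
HB.instance Definition _ (T : pointedType) :=
  @isMeasurable.Build default_measure_display (discr T)
    discrete_measurable discrete_measurable0
    discrete_measurableC discrete_measurableU.

Lemma discr_measurable (T : pointedType) (A : set (discr T)) : measurable A.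
Proof. by []. Qed.

Definition borelT (X : ptopologicalType) := g_sigma_algebraType (@open X).

(* Vectors are represented by functions T -> R[i]; the Hilbert space         *)
(* L^2(T,mu) is the set of square-integrable measurable functions, with two  *)
(* functions identified when they agree mu-a.e.                              *)

Definition cabs2 {R : realType} (z : R[i]) : R :=
  complex.Re z ^+ 2 + complex.Im z ^+ 2.

Definition cmeasurable {d} {T : measurableType d} {R : realType}
    (f : T -> R[i]) : Prop :=
  measurable_fun setT (fun t => complex.Re (f t)) /\
  measurable_fun setT (fun t => complex.Im (f t)).

Definition L2 {d} {T : measurableType d} {R : realType}
    (mu : {measure set T -> \bar R}) (xi : T -> R[i]) : Prop :=
  cmeasurable xi /\ mu.-integrable setT (fun t => (cabs2 (xi t))%:E).

Definition L2eq {d} {T : measurableType d} {R : realType}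
    (mu : {measure set T -> \bar R}) (xi eta : T -> R[i]) : Prop :=
  xi = eta %[ae mu].

Definition L2ip {d} {T : measurableType d} {R : realType}
    (mu : {measure set T -> \bar R}) (xi eta : T -> R[i]) : R[i] :=
  Complex (Rintegral mu setT (fun t => complex.Re (xi t * (eta t)^*)))
          (Rintegral mu setT (fun t => complex.Im (xi t * (eta t)^*))).

Definition L2norm2 {d} {T : measurableType d} {R : realType}
    (mu : {measure set T -> \bar R}) (xi : T -> R[i]) : R :=
  Rintegral mu setT (fun t => cabs2 (xi t)).

(** operators on L^2(T, mu), represented on representatives *)
Definition op (T : Type) (R : realType) := (T -> R[i]) -> (T -> R[i]).

Definition op_eq {d} {T : measurableType d} {R : realType}
    (mu : {measure set T -> \bar R}) (A B : op T R) : Prop :=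
  forall xi, L2 mu xi -> L2eq mu (A xi) (B xi).

Definition bounded_op {d} {T : measurableType d} {R : realType}
    (mu : {measure set T -> \bar R}) (A : op T R) : Prop :=
  [/\ forall xi, L2 mu xi -> L2 mu (A xi),
      forall xi eta, L2 mu xi -> L2 mu eta -> L2eq mu xi eta ->
        L2eq mu (A xi) (A eta),
      forall (a : R[i]) xi eta, L2 mu xi -> L2 mu eta ->
        L2eq mu (A (fun t => a * xi t + eta t)) (fun t => a * A xi t + A eta t)
    & exists M : R, forall xi, L2 mu xi ->
        L2norm2 mu (A xi) <= M * L2norm2 mu xi].

Definition adjoint_of {d} {T : measurableType d} {R : realType}
    (mu : {measure set T -> \bar R}) (A B : op T R) : Prop :=
  forall xi eta, L2 mu xi -> L2 mu eta -> L2ip mu (A xi) eta = L2ip mu xi (B eta).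

Definition unitary_op {d} {T : measurableType d} {R : realType}
    (mu : {measure set T -> \bar R}) (U : op T R) : Prop :=
  bounded_op mu U /\
  exists V : op T R, [/\ bounded_op mu V, adjoint_of mu U V,
                         op_eq mu (U \o V) id & op_eq mu (V \o U) id].

Definition unitary_rep (G : groupType) {d} {T : measurableType d} {R : realType}
    (mu : {measure set T -> \bar R}) (pi : G -> op T R) : Prop :=
  [/\ forall g, unitary_op mu (pi g),
      op_eq mu (pi 1%g) id
    & forall g h, op_eq mu (pi (g * h)%g) (pi g \o pi h)].

(** act is an action of G on X by homeomorphisms (each act g is continuous
    with continuous inverse act g^-1) *)
Definition gspace (G : groupType) (X : topologicalType) (act : G -> X -> X) : Prop :=
  [/\ forall g, continuous (act g),
      forall x, act 1%g x = x
    & forall g h x, act (g * h)%g x = act g (act h x)].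

Definition Cfun {X : topologicalType} {R : realType} (f : X -> R[i]) : Prop :=
  continuous (fun x => complex.Re (f x)) /\ continuous (fun x => complex.Im (f x)).

Definition fact (G : groupType) (X : Type) (act : G -> X -> X) {R : realType}
    (g : G) (f : X -> R[i]) : X -> R[i] :=
  fun x => f (act g^-1%g x).

Definition supp {X : topologicalType} {R : realType} (f : X -> R[i]) : set X :=
  closure [set x | f x != 0].

Definition fixset (G : groupType) (X : Type) (act : G -> X -> X) (g : G) : set X :=
  [set x | act g x = x].

Definition unital_star_hom {X : topologicalType} {d} {T : measurableType d}
    {R : realType} (mu : {measure set T -> \bar R})
    (rho : (X -> R[i]) -> op T R) : Prop :=
  [/\ forall f, Cfun f -> bounded_op mu (rho f),
      forall (a : R[i]) f g, Cfun f -> Cfun g ->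
        op_eq mu (rho (fun x => a * f x + g x))
                 (fun xi t => a * rho f xi t + rho g xi t),
      forall f g, Cfun f -> Cfun g ->
        op_eq mu (rho (fun x => f x * g x)) (rho f \o rho g),
      op_eq mu (rho (fun _ => 1)) id
    & forall f, Cfun f -> adjoint_of mu (rho f) (rho (fun x => (f x)^*))].

Definition germinal_rep (G : groupType) (X : topologicalType) (act : G -> X -> X)
    {d} {T : measurableType d} {R : realType} (mu : {measure set T -> \bar R})
    (pi : G -> op T R) (rho : (X -> R[i]) -> op T R) : Prop :=
  [/\ unitary_rep mu pi,
      unital_star_hom mu rho,
      forall g f, Cfun f -> forall S : op T R,
        bounded_op mu S -> adjoint_of mu (pi g) S ->
        op_eq mu (rho (fact act g f)) (pi g \o rho f \o S)
    &
      forall g f, Cfun f -> supp f `<=` fixset act g ->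
        op_eq mu (pi g \o rho f) (rho f)].

(** nu is quasi-invariant: g nu and nu have the same null sets, where
    (g nu)(A) = nu(g^-1 A) = nu (act g @^-1` A) *)
Definition quasi_invariant (G : groupType) (X : ptopologicalType)
    (act : G -> X -> X) {R : realType} (nu : {measure set borelT X -> \bar R}) : Prop :=
  forall g (A : set (borelT X)), measurable A ->
    (nu A = 0%E <-> nu (act g @^-1` A) = 0%E).

(** D g is (a nonnegative version of) the Radon-Nikodym derivative d(g nu)/d nu *)
Definition rn_derivative (G : groupType) (X : ptopologicalType)
    (act : G -> X -> X) {R : realType} (nu : {measure set borelT X -> \bar R})
    (D : G -> borelT X -> R) : Prop :=
  forall g, [/\ measurable_fun setT (D g),
                forall y, 0 <= D g y
              & forall A : set (borelT X), measurable A ->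
                  nu (act g @^-1` A) = (\int[nu]_(y in A) (D g y)%:E)%E].

Definition koopman (G : groupType) (X : ptopologicalType) (act : G -> X -> X)
    {R : realType} (D : G -> borelT X -> R) (g : G) : op (borelT X) R :=
  fun xi y => (Num.sqrt (D g y))%:C * xi (act g^-1%g y).

Definition mult_op (X : ptopologicalType) {R : realType} (f : X -> R[i]) :
    op (borelT X) R :=
  fun xi y => f y * xi y.

(* Gamma/H is represented inside the discrete space `set G`: we use the      *)
(* counting measure restricted to the set of left cosets gH, so that         *)
(* L^2(set G, cosetmeas H) = l^2(Gamma/H).                                   *)

Definition subgroup (G : groupType) (H : set G) : Prop :=
  [/\ H 1%g, forall g h, H g -> H h -> H (g * h)%g & forall g, H g -> H g^-1%g].

Definition lcoset (G : groupType) (g : G) (H : set G) : set G :=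
  [set (g * h)%g | h in H].

Definition is_coset (G : groupType) (H : set G) : set (discr (set G)) :=
  [set A | exists g, A = lcoset g H].

Definition cosetmeas (R : realType) (G : groupType) (H : set G) :
    {measure set discr (set G) -> \bar R} :=
  mrestr (@counting (discr (set G)) R) (discr_measurable (is_coset H)).

Definition quasi_reg (R : realType) (G : groupType) (g : G) : op (discr (set G)) R :=
  fun xi A => xi [set (g^-1 * a)%g | a in A].

(** Poisson map: P_x(f) xi (kH) = f(k x) xi(kH) *)
Definition poisson (G : groupType) (X : topologicalType) (act : G -> X -> X)
    (x : X) {R : realType} (f : X -> R[i]) : op (discr (set G)) R :=
  fun xi A => f (act (xget 1%g A) x) * xi A.

Definition stab (G : groupType) (X : Type) (act : G -> X -> X) (x : X) : set G :=
  [set g | act g x = x].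

Definition stab0 (G : groupType) (X : topologicalType) (act : G -> X -> X) (x : X) :
    set G :=
  [set g | exists U : set X, [/\ open U, U x & forall y, U y -> act g y = y]].

(* (i) Write D g for d(g nu)/d nu. The change of variables
     \int F (g^-1 y) D g y dnu(y) = \int F dnu
   makes kappa(g) an isometry with adjoint kappa(g^-1), and since densities are
   unique a.e. on a sigma-finite space, D 1 = 1 and D (g h) = (D h o g^-1) * D g
   almost everywhere, so kappa is a unitary representation. For germinality,
   g is the identity on the open set {f <> 0}, so D g = 1 a.e. there, while
   f o g^-1 = f everywhere.
   (ii) Counting measure on Gamma/H is invariant under left translation, so
   lambda(g) is unitary with adjoint lambda(g^-1). If f (k x) <> 0, then
   k^-1 g k fixes the neighbourhood k^-1 {f <> 0} of x pointwise, so it lies in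
   Gamma_x^0 <= H and g^-1 k H = k H: this is germinality. *)

From Pilot Require Import Defs.
From mathcomp Require Import all_boot all_order all_algebra monoid.
From mathcomp Require Import all_classical all_reals all_analysis.
From mathcomp Require Import measurable_realfun complex ring lra.
From mathcomp Require finmap.
Import numFieldNormedType.Exports.

Set Implicit Arguments.
Unset Strict Implicit.
Unset Printing Implicit Defensive.
Import Order.TTheory GRing.Theory Num.Theory.

Local Open Scope classical_set_scope.
Local Open Scope ring_scope.
Local Open Scope complex_scope.

Section complex_facts.
Variable R : realType.
Implicit Types a z : R[i].

Lemma Re_add a z : complex.Re (a + z) = complex.Re a + complex.Re z.
Proof. by case: a; case: z. Qed.

Lemma Im_add a z : complex.Im (a + z) = complex.Im a + complex.Im z.
Proof. by case: a; case: z. Qed.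

Lemma Re_mul a z :
  complex.Re (a * z) = complex.Re a * complex.Re z - complex.Im a * complex.Im z.
Proof. by case: a; case: z. Qed.

Lemma Im_mul a z :
  complex.Im (a * z) = complex.Re a * complex.Im z + complex.Im a * complex.Re z.
Proof. by case: a => a b; case: z => c e /=; ring. Qed.

Lemma Re_mul_conj z : complex.Re (z * z^*) = cabs2 z.
Proof. by case: z => a b; rewrite /cabs2 /=; ring. Qed.

Lemma cabs2_ge0 z : 0 <= cabs2 z.
Proof. by rewrite /cabs2 addr_ge0 // sqr_ge0. Qed.

Lemma cabs2_eq0 z : cabs2 z = 0 -> z = 0.
Proof.
case: z => a b /eqP; rewrite /cabs2 /= paddr_eq0 ?sqr_ge0 // !sqrf_eq0.
by case/andP => /eqP -> /eqP ->.
Qed.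

Lemma cabs2M a z : cabs2 (a * z) = cabs2 a * cabs2 z.
Proof. by case: a => a b; case: z => c e; rewrite /cabs2 /=; ring. Qed.

Lemma cabs2D_le a z : cabs2 (a + z) <= 2 * (cabs2 a + cabs2 z).
Proof.
case: a => a b; case: z => c e; rewrite /cabs2 /=.
by have := sqr_ge0 (a - c); have := sqr_ge0 (b - e); nra.
Qed.

Lemma normr_Re_mul_conj_le a z : `|complex.Re (a * z^*)| <= cabs2 a + cabs2 z.
Proof.
case: a => a b; case: z => c e; rewrite /cabs2 /= ler_norml.
have := sqr_ge0 (a + c); have := sqr_ge0 (a - c).
have := sqr_ge0 (b + e); have := sqr_ge0 (b - e).
by move=> *; apply/andP; split; nra.
Qed.

Lemma cabs2_sqrt_scale (r : R) z :
  0 <= r -> cabs2 ((Num.sqrt r)%:C * z) = r * cabs2 z.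
Proof. by move=> r0; rewrite cabs2M /cabs2 /= expr0n addr0 sqr_sqrtr. Qed.

Lemma sqrt_mul_inv (a b : R) :
  0 <= a -> 0 <= b -> a * b = 1 -> Num.sqrt a * b = Num.sqrt b.
Proof.
move=> a0 b0 ab1.
by rewrite -[X in _ * X](sqr_sqrtr b0) expr2 mulrA -sqrtrM // ab1 sqrtr1 mul1r.
Qed.

End complex_facts.

Section cmeasurable.
Context d (T : measurableType d) (R : realType).
Implicit Types xi eta : T -> R[i].

Lemma cmeasurableD xi eta : cmeasurable xi -> cmeasurable eta ->
  cmeasurable (fun t => xi t + eta t).
Proof.
move=> [? ?] [? ?]; split.
  by under eq_fun do rewrite Re_add; exact: measurable_funD.
by under eq_fun do rewrite Im_add; exact: measurable_funD.
Qed.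

Lemma cmeasurableM xi eta : cmeasurable xi -> cmeasurable eta ->
  cmeasurable (fun t => xi t * eta t).
Proof.
move=> [? ?] [? ?]; split.
  by under eq_fun do rewrite Re_mul; apply: measurable_funB; exact: measurable_funM.
by under eq_fun do rewrite Im_mul; apply: measurable_funD; exact: measurable_funM.
Qed.

Lemma cmeasurable_conj xi : cmeasurable xi -> cmeasurable (fun t => (xi t)^*).
Proof.
move=> [mRe mIm]; split.
  by rewrite (_ : (fun t => _) = fun t => complex.Re (xi t)) //;
    apply: funext => t; case: (xi t).
rewrite (_ : (fun t => _) = fun t => - complex.Im (xi t)).
  exact: measurable_funN.
by apply: funext => t; case: (xi t).
Qed.

Lemma measurable_cabs2 xi : cmeasurable xi -> measurable_fun setT (fun t => cabs2 (xi t)).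
Proof. by move=> [? ?]; apply: measurable_funD; exact: measurable_funX. Qed.

Lemma cmeasurable_comp d' (T' : measurableType d') (p : T' -> T) xi :
  measurable_fun setT p -> cmeasurable xi -> cmeasurable (fun t => xi (p t)).
Proof.
by move=> mp [mRe mIm]; split; [exact: measurableT_comp mRe mp|exact: measurableT_comp mIm mp].
Qed.

End cmeasurable.

Section L2_space.
Context d (T : measurableType d) (R : realType) (mu : {measure set T -> \bar R}).
Implicit Types xi eta : T -> R[i].

Lemma L2eq_of_eq xi eta : (forall t, xi t = eta t) -> L2eq mu xi eta.
Proof. by move=> e; rewrite (funext e); exact: ae_eq_refl. Qed.

Lemma Rintegral_ae_eq (f1 f2 : T -> R) :
  measurable_fun setT f1 -> measurable_fun setT f2 ->
  {ae mu, forall t, f1 t = f2 t} -> Rintegral mu setT f1 = Rintegral mu setT f2.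
Proof.
move=> mf1 mf2 f12; rewrite /Rintegral; congr fine.
apply: ae_eq_integral => //; try exact/measurable_EFinP.
by apply: filterS f12 => t -> _.
Qed.

Lemma L2_of_integral_cabs2 xi eta : cmeasurable eta -> L2 mu xi ->
  (\int[mu]_t (cabs2 (eta t))%:E = \int[mu]_t (cabs2 (xi t))%:E)%E -> L2 mu eta.
Proof.
move=> meta [_ /integrableP[_ fin]] e; split => //.
apply/integrableP; split; first exact/measurable_EFinP/measurable_cabs2.
have absE zeta : (\int[mu]_t `|(EFin \o (fun t => cabs2 (zeta t))) t|)%E =
    (\int[mu]_t (cabs2 (zeta t))%:E)%E.
  by apply: eq_integral => t _; rewrite /comp abse_EFin ger0_norm // cabs2_ge0.
by rewrite absE e -absE.
Qed.

Lemma L2_mul_bounded (m : T -> R[i]) (M : R) xi : cmeasurable m ->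
  (forall t, cabs2 (m t) <= M) -> L2 mu xi -> L2 mu (fun t => m t * xi t).
Proof.
move=> mm mM [mxi ixi]; split; first exact: cmeasurableM.
apply: (@le_integrable _ _ _ _ _ _ _ (fun t => (`|M| * cabs2 (xi t))%:E)) => //.
- by apply/measurable_EFinP/measurable_cabs2; exact: cmeasurableM.
- move=> t _; rewrite !gee0_abs ?lee_fin ?mulr_ge0 ?cabs2_ge0 // cabs2M.
  by rewrite ler_wpM2r ?cabs2_ge0 // (le_trans (mM t)) // ler_norm.
- under eq_fun do rewrite EFinM; exact: integrableZl.
Qed.

Lemma L2D xi eta : L2 mu xi -> L2 mu eta -> L2 mu (fun t => xi t + eta t).
Proof.
move=> [mxi ixi] [meta ieta]; split; first exact: cmeasurableD.
apply: (@le_integrable _ _ _ _ _ _ _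
  (fun t => (2 * cabs2 (xi t) + 2 * cabs2 (eta t))%:E)) => //.
- by apply/measurable_EFinP/measurable_cabs2; exact: cmeasurableD.
- move=> t _; have := cabs2D_le (xi t) (eta t).
  rewrite !gee0_abs ?lee_fin ?cabs2_ge0 ?addr_ge0 ?mulr_ge0 ?cabs2_ge0 //.
  by rewrite mulrDr.
- under eq_fun do rewrite EFinD !EFinM.
  by apply: integrableD => //; exact: integrableZl.
Qed.

Lemma L2B xi eta : L2 mu xi -> L2 mu eta -> L2 mu (fun t => xi t - eta t).
Proof.
move=> Lxi Leta.
have Lneta : L2 mu (fun t => -1 * eta t).
  by apply: (@L2_mul_bounded _ 1) => // _; rewrite /cabs2 /=; lra.
by have := L2D Lxi Lneta; under eq_fun do rewrite mulN1r.
Qed.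

Lemma integrable_Re_mul_conj xi eta : L2 mu xi -> L2 mu eta ->
  mu.-integrable setT (EFin \o (fun t => complex.Re (xi t * (eta t)^*))).
Proof.
move=> [mxi ixi] [meta ieta].
apply: (@le_integrable _ _ _ _ _ _ _ (fun t => (cabs2 (xi t) + cabs2 (eta t))%:E)) => //.
- apply/measurable_EFinP.
  by case: (cmeasurableM mxi (cmeasurable_conj meta)).
- move=> t _; rewrite /comp !abse_EFin lee_fin.
  by rewrite (ger0_norm (addr_ge0 (cabs2_ge0 _) (cabs2_ge0 _))) normr_Re_mul_conj_le.
- by under eq_fun do rewrite EFinD; exact: integrableD.
Qed.

Lemma L2eq0_of_Re_ip xi : L2 mu xi ->
  complex.Re (L2ip mu xi xi) = 0 -> L2eq mu xi (fun _ => 0).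
Proof.
move=> [mxi ixi]; rewrite /L2ip /=; under eq_fun do rewrite Re_mul_conj.
move=> norm0.
have mE : measurable_fun setT (EFin \o (fun t => cabs2 (xi t))).
  by apply/measurable_EFinP; exact: measurable_cabs2.
have int0 : (\int[mu]_x `|(EFin \o (fun t => cabs2 (xi t))) x| = 0)%E.
  rewrite -[RHS]/(0%R%:E) -norm0 /Rintegral fineK ?(integrable_fin_num measurableT ixi) //.
  by apply: eq_integral => t _; rewrite /comp abse_EFin ger0_norm ?cabs2_ge0.
apply: filterS ((ae_eq_integral_abs mu measurableT mE).1 int0) => t /= + _.
by move=> /(_ I) /= [] /cabs2_eq0.
Qed.

Lemma adjoint_uniq (A S S' : op T R) :
  (forall xi, L2 mu xi -> L2 mu (S xi)) -> (forall xi, L2 mu xi -> L2 mu (S' xi)) ->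
  adjoint_of mu A S -> adjoint_of mu A S' -> op_eq mu S S'.
Proof.
move=> LS LS' adjS adjS' eta Leta.
pose delta t := S eta t - S' eta t.
have Ldelta : L2 mu delta by apply: L2B; [exact: LS|exact: LS'].
have : complex.Re (L2ip mu delta delta) = 0.
  have e : L2ip mu delta (S eta) = L2ip mu delta (S' eta) by rewrite -adjS // -adjS'.
  rewrite /L2ip /= (_ : (fun t => _) = fun t => complex.Re (delta t * (S eta t)^*)
    - complex.Re (delta t * (S' eta t)^*)); last first.
    apply: funext => t; rewrite /delta.
    by case: (S eta t) => a b; case: (S' eta t) => a' b' /=; ring.
  rewrite RintegralB //; last 2 first.
  - exact: integrable_Re_mul_conj Ldelta (LS _ Leta).
  - exact: integrable_Re_mul_conj Ldelta (LS' _ Leta).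
  by have /(congr1 (@complex.Re R)) /= -> := e; rewrite subrr.
move/(L2eq0_of_Re_ip Ldelta); apply: filterS => t h /h /eqP.
by rewrite subr_eq0 => /eqP.
Qed.

Lemma bounded_op_mul (m : T -> R[i]) (M : R) : cmeasurable m ->
  (forall t, cabs2 (m t) <= M) -> bounded_op mu (fun xi t => m t * xi t).
Proof.
move=> mm mM; split.
- by move=> xi; exact: L2_mul_bounded mm mM.
- by move=> xi eta _ _; apply: filterS => t h /h ->.
- by move=> a xi eta _ _; apply: L2eq_of_eq => t; ring.
- exists `|M| => xi Lxi; have [_ ixi] := Lxi.
  rewrite /L2norm2 -RintegralZl //; apply: le_Rintegral => //.
  + by case: (L2_mul_bounded mm mM Lxi).
  + have -> : EFin \o (fun t => `|M| * cabs2 (xi t)) =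
        (fun t => `|M|%:E * (EFin \o (fun t => cabs2 (xi t))) t)%E.
      by apply: funext => t; rewrite /= EFinM.
    exact: integrableZl.
  + move=> t _; rewrite cabs2M ler_wpM2r ?cabs2_ge0 //.
    by rewrite (le_trans (mM t)) // ler_norm.
Qed.

Section representations.
Variable G : groupType.
Implicit Types pi : G -> op T R.

Lemma unitary_rep_intro pi :
  (forall g, bounded_op mu (pi g)) ->
  (forall g, adjoint_of mu (pi g) (pi g^-1%g)) ->
  op_eq mu (pi 1%g) id ->
  (forall g h, op_eq mu (pi (g * h)%g) (pi g \o pi h)) -> unitary_rep mu pi.
Proof.
move=> bpi adjpi pi1 piM; split => // g; split => //.
exists (pi g^-1%g); split => // xi Lxi; apply: ae_eq_trans (pi1 _ Lxi).
  by apply: ae_eq_sym; have := piM g g^-1%g xi Lxi; rewrite mulgV.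
by apply: ae_eq_sym; have := piM g^-1%g g xi Lxi; rewrite mulVg.
Qed.

Lemma germinal_rep_intro (X : topologicalType) (act : G -> X -> X) pi
    (rho : (X -> R[i]) -> op T R) :
  (forall g, bounded_op mu (pi g)) ->
  (forall g, adjoint_of mu (pi g) (pi g^-1%g)) ->
  op_eq mu (pi 1%g) id ->
  (forall g h, op_eq mu (pi (g * h)%g) (pi g \o pi h)) ->
  unital_star_hom mu rho ->
  (forall g f, Cfun f ->
     op_eq mu (rho (Defs.fact act g f)) (pi g \o rho f \o pi g^-1%g)) ->
  (forall g f, Cfun f -> supp f `<=` Defs.fixset act g ->
     op_eq mu (pi g \o rho f) (rho f)) ->
  germinal_rep act mu pi rho.
Proof.
move=> bpi adjpi pi1 piM rhoS covariant germinal; split => //.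
  exact: unitary_rep_intro.
move=> g f Cf S [LS _ _ _] adjS xi Lxi.
have [Lpi' _ _ _] := bpi g^-1%g; have [Lpi pi_ae _ _] := bpi g.
have [/(_ f Cf) [Lrho rho_ae _ _] _ _ _ _] := rhoS.
have S_pi' : L2eq mu (S xi) (pi g^-1%g xi).
  by apply: (adjoint_uniq LS Lpi' adjS (adjpi g)).
apply: ae_eq_trans (covariant g f Cf xi Lxi) _ => /=.
apply: pi_ae; [exact: Lrho (Lpi' _ Lxi)|exact: Lrho (LS _ Lxi)|].
by apply: rho_ae; [exact: Lpi'|exact: LS|exact: ae_eq_sym].
Qed.

End representations.

End L2_space.

Lemma Cfun_bounded (R : realType) (X : topologicalType) (f : X -> R[i]) :
  compact [set: X] -> Cfun f -> exists M : R, forall x, cabs2 (f x) <= M.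
Proof.
move=> cX [cRe cIm].
have cf2 : continuous (fun x => cabs2 (f x)).
  by move=> x; apply: cvgD; apply: cvgM; [exact: cRe|exact: cRe|exact: cIm|exact: cIm].
have [M [_ hM]] := compact_bounded (continuous_compact (continuous_subspaceT cf2) cX).
exists (M + 1) => x; apply: le_trans (ler_norm _) _.
by apply: (hM (M + 1)); [lra|exists x].
Qed.

Lemma Cfun_open_neq0 (R : realType) (X : topologicalType) (f : X -> R[i]) :
  Cfun f -> open [set y | f y != 0].
Proof.
move=> [cRe cIm].
have -> : [set y | f y != 0] = (fun y => complex.Re (f y)) @^-1` [set r | r != 0]
    `|` (fun y => complex.Im (f y)) @^-1` [set r | r != 0].
  apply/seteqP; split => y /=; case: (f y) => a b /=.
    by rewrite eq_complex negb_and => /orP.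
  by rewrite eq_complex negb_and => /orP.
by apply: openU; apply: open_comp; try exact: open_neq; move=> y _; [exact: cRe|exact: cIm].
Qed.

Lemma unital_star_hom_comp d (T : measurableType d) (R : realType)
    (mu : {measure set T -> \bar R}) (X : topologicalType) (p : T -> X) :
  compact [set: X] -> (forall f : X -> R[i], Cfun f -> cmeasurable (fun t => f (p t))) ->
  unital_star_hom mu (fun (f : X -> R[i]) (xi : T -> R[i]) t => f (p t) * xi t).
Proof.
move=> cX mfp; split.
- move=> f Cf; have [M hM] := Cfun_bounded cX Cf.
  exact: (bounded_op_mul mu (mfp f Cf) (fun t => hM (p t))).
- by move=> a f g _ _ xi _; apply: L2eq_of_eq => t /=; ring.
- by move=> f g _ _ xi _; apply: L2eq_of_eq => t /=; ring.
- by move=> xi _; apply: L2eq_of_eq => t /=; ring.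
- move=> f _ xi eta _ _; rewrite /L2ip; congr Complex; apply: eq_Rintegral => t _;
  by case: (f (p t)) => a b; case: (xi t) => c e; case: (eta t) => u v /=; ring.
Qed.

Section gspace_facts.
Variables (G : groupType) (X : topologicalType) (act : G -> X -> X).
Hypothesis gs : gspace act.

Lemma act_continuous g : continuous (act g).
Proof. by case: gs. Qed.

Lemma act1 x : act 1%g x = x.
Proof. by case: gs. Qed.

Lemma actM g h x : act (g * h)%g x = act g (act h x).
Proof. by case: gs. Qed.

Lemma actK g : cancel (act g) (act g^-1%g).
Proof. by move=> x; rewrite -actM mulVg act1. Qed.

Lemma actKV g : cancel (act g^-1%g) (act g).
Proof. by move=> x; rewrite -actM mulgV act1. Qed.

Lemma fixset_supp (R : realType) (f : X -> R[i]) g y :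
  supp f `<=` Defs.fixset act g -> f y != 0 -> act g y = y.
Proof. by move=> fix_f fy; apply: fix_f; exact: subset_closure. Qed.

Lemma supp_fixset_actV (R : realType) (f : X -> R[i]) g y :
  supp f `<=` Defs.fixset act g -> f (act g^-1%g y) = f y.
Proof.
move=> fix_f; have [fy|/(fixset_supp fix_f) gy] := eqVneq (f y) 0; last first.
  by rewrite -{1}gy actK.
rewrite fy; apply/eqP/negPn/negP => nz.
have := fixset_supp fix_f nz; rewrite actKV => e.
by move: nz; rewrite -e fy eqxx.
Qed.

Lemma stab0_conj (U : set X) k g x : open U -> U (act k x) ->
  (forall y, U y -> act g y = y) -> stab0 act x (k^-1 * g * k)%g.
Proof.
move=> oU Ukx gU; exists (act k @^-1` U); split => //.
  by apply: open_comp => // y _; exact: act_continuous.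
by move=> y /gU gky; rewrite !actM gky actK.
Qed.

End gspace_facts.

Lemma counting_eq0 (T : choiceType) (R : realType) (S : set T) :
  @counting T R S = 0%E -> S = set0.
Proof.
rewrite /counting; case: ifPn => // /asboolP fS [] /eqP.
by rewrite pnatr_eq0 finmap.cardfs_eq0 => /eqP /fset_set_set0; exact.
Qed.

Lemma counting_can_image (T : choiceType) (R : realType) (f g : T -> T) :
  cancel f g -> forall S, @counting T R (f @` S) = counting S.
Proof.
move=> fK S; rewrite /counting.
have gfS : g @` (f @` S) = S.
  apply/seteqP; split => [x [y [z Sz <-] <-]|x Sx]; first by rewrite fK.
  by exists (f x); [exists x|rewrite fK].
have [finS|infS] := pselect (finite_set S).
  rewrite !asboolT //; last exact: finite_image.
  by rewrite fset_set_image // finmap.card_imfset //; exact: can_inj fK.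
by rewrite !asboolF // => /(finite_image g); rewrite gfS.
Qed.

Section left_translation.
Variable G : groupType.

(* [quasi_reg g xi A] unfolds to [xi (ltrans g^-1 A)]. *)
Definition ltrans (h : G) (A : set G) : set G := [set (h * a)%g | a in A].

Lemma ltransM a b A : ltrans a (ltrans b A) = ltrans (a * b)%g A.
Proof.
apply/seteqP; split => [x [y [z Az <-] <-]|x [z Az <-]].
  by exists z => //; rewrite mulgA.
by exists (b * z)%g; [exists z|rewrite mulgA].
Qed.

Lemma ltrans1 A : ltrans 1%g A = A.
Proof.
apply/seteqP; split => [x [y Ay <-]|x Ax]; first by rewrite mul1g.
by exists x => //; rewrite mul1g.
Qed.

Lemma ltransK h : cancel (ltrans h) (ltrans h^-1%g).
Proof. by move=> A; rewrite ltransM mulVg ltrans1. Qed.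

Lemma ltransKV h : cancel (ltrans h^-1%g) (ltrans h).
Proof. by move=> A; rewrite ltransM mulgV ltrans1. Qed.

Lemma ltrans_lcoset h g H : ltrans h (lcoset g H) = lcoset (h * g)%g H.
Proof. exact: ltransM. Qed.

Lemma is_coset_ltrans H h A : is_coset H A -> is_coset H (ltrans h A).
Proof. by move=> [g ->]; exists (h * g)%g; rewrite ltrans_lcoset. Qed.

End left_translation.

Section coset_measure.
Variables (R : realType) (G : groupType) (H : set G).
Local Notation mu := (cosetmeas R H).

Lemma cosetmeas_ltrans h N : mu (ltrans h @^-1` N) = mu N.
Proof.
rewrite /= /mrestr -[RHS](counting_can_image _ (ltransKV h)).
congr counting; apply/seteqP; split => [A [NA CA]|A [B [NB CB] <-]].
  by exists (ltrans h A); [split => //; exact: is_coset_ltrans|rewrite ltransK].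
by split; [rewrite /preimage /= ltransKV|exact: is_coset_ltrans].
Qed.

Lemma cosetmeas_aeP (xi eta : discr (set G) -> R[i]) :
  L2eq mu xi eta <-> (forall A, is_coset H A -> xi A = eta A).
Proof.
split=> [[N [_ N0 sN]] A CA|xi_eta].
  apply: contrapT => neq; have /seteqP[/(_ A) + _] := counting_eq0 N0.
  by apply; split => //; apply: sN => /= /(_ I).
exists [set A | xi A <> eta A]; split => //; last by move=> A /= nA; apply: contra_not nA.
rewrite /= /mrestr (_ : _ `&` _ = set0) ?counting0 //.
by apply/seteqP; split => // A [/= + CA]; apply; exact: xi_eta.
Qed.

Lemma ge0_integral_cosetmeas_ltrans h (f : discr (set G) -> \bar R) :
  (forall A, 0 <= f A)%E -> (\int[mu]_A f (ltrans h A) = \int[mu]_A f A)%E.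
Proof.
move=> f0.
have mh : measurable_fun setT (ltrans h : discr (set G) -> discr (set G)) by [].
have := ge0_integral_pushforward mh mu measurableT (fun _ _ _ => I) (fun A _ => f0 A).
rewrite preimage_setT => <-.
by apply: eq_measure_integral => A _ _; exact: cosetmeas_ltrans.
Qed.

Lemma integral_cosetmeas_ltrans h (f : discr (set G) -> \bar R) :
  (\int[mu]_A f (ltrans h A) = \int[mu]_A f A)%E.
Proof.
rewrite integralE [RHS]integralE.
rewrite -(ge0_integral_cosetmeas_ltrans h (funepos_ge0 f)).
rewrite -(ge0_integral_cosetmeas_ltrans h (funeneg_ge0 f)).
by rewrite (_ : (fun A => f (ltrans h A)) = f \o ltrans h) // funepos_comp funeneg_comp.
Qed.

Lemma Rintegral_cosetmeas_ltrans h (f : discr (set G) -> R) :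
  Rintegral mu setT (fun A => f (ltrans h A)) = Rintegral mu setT f.
Proof. by rewrite /Rintegral (integral_cosetmeas_ltrans h (EFin \o f)). Qed.

End coset_measure.

Section quasi_regular_poisson.
Variables (R : realType) (G : groupType) (X : ptopologicalType) (act : G -> X -> X).
Hypotheses (cX : compact [set: X]) (gs : gspace act).
Variables (x : X) (H : set G).
Hypotheses (sgH : subgroup H) (stab0_sub : stab0 act x `<=` H)
  (sub_stab : H `<=` stab act x).
Local Notation mu := (cosetmeas R H).
Local Notation T := (discr (set G)).

Lemma cmeasurable_discr (xi : T -> R[i]) : cmeasurable xi.
Proof. by split=> _ Y _; exact: discr_measurable. Qed.

Lemma lcoset_refl k : lcoset k H k.
Proof. by exists 1%g; [case: sgH|rewrite mulg1]. Qed.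

Lemma lcoset_mulr k h : H h -> lcoset (k * h)%g H = lcoset k H.
Proof.
case: sgH => _ HM HV Hh; rewrite -ltrans_lcoset /lcoset; congr ltrans.
apply/seteqP; split => [y [z Hz <-]|y Hy]; first exact: HM.
by exists (h^-1 * y)%g; [exact: HM (HV _ Hh) Hy|rewrite mulgA mulgV mul1g].
Qed.

Lemma act_xget_lcoset k : act (xget 1%g (lcoset k H)) x = act k x.
Proof. by have [h Hh <-] := xgetI 1%g (lcoset_refl k); rewrite (actM gs) sub_stab. Qed.

Lemma quasi_reg_bounded g : bounded_op mu (@quasi_reg R G g).
Proof.
split.
- move=> xi [_ /integrableP[_ fin]]; split; first exact: cmeasurable_discr.
  apply/integrableP; split.
    by apply/measurable_EFinP => _ Y _; exact: discr_measurable.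
  by move: fin; rewrite -(integral_cosetmeas_ltrans _ g^-1%g).
- move=> xi eta _ _ /cosetmeas_aeP xi_eta; apply/cosetmeas_aeP => A CA.
  by apply: xi_eta; exact: is_coset_ltrans.
- by move=> a xi eta _ _; exact: L2eq_of_eq.
- by exists 1 => xi _; rewrite mul1r /L2norm2 -[leRHS](Rintegral_cosetmeas_ltrans _ g^-1%g).
Qed.

Lemma quasi_reg_adjoint g : adjoint_of mu (@quasi_reg R G g) (quasi_reg g^-1%g).
Proof.
move=> xi eta _ _; rewrite /L2ip; congr Complex;
  rewrite -[RHS](Rintegral_cosetmeas_ltrans _ g^-1%g);
  by apply: eq_Rintegral => A _; rewrite /quasi_reg -!/(ltrans _ _) invgK ltransKV.
Qed.

Lemma quasi_reg1 : op_eq mu (@quasi_reg R G 1%g) id.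
Proof.
by move=> xi _; apply: L2eq_of_eq => A; rewrite /quasi_reg -/(ltrans _ _) invg1 ltrans1.
Qed.

Lemma quasi_regM g h :
  op_eq mu (@quasi_reg R G (g * h)%g) (quasi_reg g \o quasi_reg h).
Proof.
by move=> xi _; apply: L2eq_of_eq => A; rewrite /= /quasi_reg -!/(ltrans _ _) ltransM invgM.
Qed.

Lemma poisson_star_hom : unital_star_hom mu (@poisson G X act x R).
Proof. exact: unital_star_hom_comp cX (fun f _ => cmeasurable_discr _). Qed.

Lemma poisson_covariant g f : Cfun f -> op_eq mu (poisson act x (Defs.fact act g f))
  (@quasi_reg R G g \o poisson act x f \o quasi_reg g^-1%g).
Proof.
move=> _ xi _; apply/cosetmeas_aeP => _ [k ->].
rewrite /= /poisson /Defs.fact /quasi_reg -!/(ltrans _ _) invgK.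
by rewrite ltransKV ltrans_lcoset !act_xget_lcoset (actM gs).
Qed.

Lemma poisson_germinal g f : Cfun f -> supp f `<=` Defs.fixset act g ->
  op_eq mu (@quasi_reg R G g \o poisson act x f) (poisson act x f).
Proof.
move=> Cf fix_f xi _; apply/cosetmeas_aeP => _ [k ->].
rewrite /= /poisson /quasi_reg -!/(ltrans _ _) ltrans_lcoset !act_xget_lcoset.
rewrite (actM gs) (supp_fixset_actV gs _ fix_f).
have [->|fk] := eqVneq (f (act k x)) 0; first by rewrite !mul0r.
have : stab0 act x (k^-1 * g * k)%g.
  apply: (stab0_conj gs (Cfun_open_neq0 Cf) fk).
  by move=> y; exact: fixset_supp fix_f.
move=> /stab0_sub; case: sgH => _ _ HV /HV; rewrite !invgM invgK mulgA => Hk.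
by rewrite -(lcoset_mulr k Hk) !mulgA mulgV mul1g.
Qed.

Theorem germinal_quasi_reg_poisson :
  germinal_rep act mu (@quasi_reg R G) (poisson act x).
Proof.
apply: germinal_rep_intro.
- exact: quasi_reg_bounded.
- exact: quasi_reg_adjoint.
- exact: quasi_reg1.
- exact: quasi_regM.
- exact: poisson_star_hom.
- exact: poisson_covariant.
- exact: poisson_germinal.
Qed.

End quasi_regular_poisson.

Section integral_density.
Context d (T : measurableType d) (R : realType).
Variables (mu nu : {measure set T -> \bar R}) (g : T -> R).
Hypotheses (g0 : forall x, 0 <= g x) (mg : measurable_fun setT g)
  (nu_g : forall A, measurable A -> nu A = (\int[mu]_(x in A) (g x)%:E)%E).
Import HBNNSimple.
Local Open Scope ereal_scope.

Lemma integral_density_indic A E : measurable A -> measurable E ->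
  \int[mu]_(x in E) ((\1_A x)%:E * (g x)%:E) = nu (A `&` E).
Proof.
move=> mA mE; rewrite nu_g; last exact: measurableI.
rewrite setIC integral_mkcondr epatch_indic; apply: eq_integral => x _.
by rewrite muleC.
Qed.

Lemma integral_density_nnsfun (h : {nnsfun T >-> R}) E : measurable E ->
  \int[mu]_(x in E) ((h x)%:E * (g x)%:E) = \int[nu]_(x in E) (h x)%:E.
Proof.
move=> mE.
have hE x : (h x)%:E = \sum_(r \in range h) (r * \1_(h @^-1` [set r]) x)%:E.
  by rewrite fimfunE fsumEFin.
have hgE x : (h x)%:E * (g x)%:E =
    \sum_(r \in range h) (r * \1_(h @^-1` [set r]) x)%:E * (g x)%:E.
  by rewrite hE ge0_mule_fsuml // => r; exact: nnfun_muleindic_ge0.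
under eq_integral do rewrite hgE.
under [RHS]eq_integral do rewrite hE.
have mind r : measurable_fun E (fun x => (r * \1_(h @^-1` [set r]) x)%:E).
  by apply/measurable_EFinP/measurable_funM.
rewrite !ge0_integral_fsum //.
- apply: eq_fsbigr => r /[!inE] -[t _ <-].
  rewrite integralZl_indic_nnsfun // integral_indic //.
  under eq_integral do rewrite EFinM -muleA.
  rewrite ge0_integralZl ?integral_density_indic //.
  + apply: emeasurable_funM; last exact/measurable_EFinP/measurable_funTS.
    by apply/measurable_EFinP; exact: measurable_funTS.
  + by move=> x _; rewrite mule_ge0 ?lee_fin.
  + by rewrite lee_fin.
- by move=> r x _; exact: nnfun_muleindic_ge0.
- by move=> r; apply: emeasurable_funM => //; exact/measurable_EFinP/measurable_funTS.
- by move=> r x _; rewrite mule_ge0 ?lee_fin //; exact: nnfun_muleindic_ge0.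
Qed.

(* As [change_of_variables] of charge.v, but for an arbitrary density [g] of
   an arbitrary measure [nu]. *)
Lemma integral_density f E : (forall x, 0 <= f x) -> measurable E ->
  measurable_fun E f ->
  \int[mu]_(x in E) (f x * (g x)%:E) = \int[nu]_(x in E) f x.
Proof.
move=> f0 mE mf; pose h := nnsfun_approx mE mf.
have hf x : E x -> (EFin \o h ^~ x) @ \oo --> f x.
  by move=> Ex; apply: cvg_nnsfun_approx => // *; exact: f0.
have h_nd x : E x -> nondecreasing_seq (fun n => (h n x)%:E).
  by move=> _ m n mn; rewrite lee_fin; exact/lefP/nd_nnsfun_approx.
have mh n : measurable_fun E (fun x => (h n x)%:E).
  by apply/measurable_EFinP/measurable_funTS.
transitivity (limn (fun n => \int[mu]_(x in E) ((h n x)%:E * (g x)%:E))).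
  rewrite -monotone_convergence //.
  - apply: eq_integral => x /[!inE] Ex; apply/esym/cvg_lim => //.
    by apply: cvgeZr => //; exact: hf.
  - by move=> n; apply: emeasurable_funM => //; exact/measurable_EFinP/measurable_funTS.
  - by move=> n x _; rewrite mule_ge0 ?lee_fin.
  - by move=> x Ex m n mn; rewrite lee_wpmul2r ?lee_fin //; exact: h_nd.
under eq_fun do rewrite integral_density_nnsfun //.
rewrite -monotone_convergence //; last by move=> n x _; rewrite lee_fin.
by apply: eq_integral => x /[!inE] Ex; apply: cvg_lim => //; exact: hf.
Qed.

End integral_density.

Lemma sigma_finite_integral_ae_eq d (T : measurableType d) (R : realType)
    (nu : {measure set T -> \bar R}) (f1 f2 : T -> R) :
  sigma_finite setT nu -> (forall y, 0 <= f1 y) ->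
  measurable_fun setT f1 -> measurable_fun setT f2 ->
  (forall A, measurable A ->
     (\int[nu]_(y in A) (f1 y)%:E = \int[nu]_(y in A) (f2 y)%:E)%E) ->
  {ae nu, forall y, f1 y = f2 y}.
Proof.
move=> [F UF mF] f10 mf1 mf2 f12.
(* Both functions are integrable on each [B n m], and the [B n m] exhaust [T]. *)
pose B n m := F n `&` [set y | f1 y <= m%:R].
have mB n m : measurable (B n m).
  apply: measurableI; first by case: (mF n).
  have := mf1 measurableT _ (measurable_itv `]-oo, m%:R]); rewrite setTI.
  by congr measurable; apply/seteqP; split => y /=; rewrite in_itv.
have aeB n m : {ae nu, forall y, B n m y -> f1 y = f2 y}.
  suff : ae_eq nu (B n m) (EFin \o f1) (EFin \o f2) by apply: filterS => y h /h [].
  apply: integral_ae_eq => //; last by move=> E _ mE; exact: f12.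
  - apply: (@le_integrable _ _ _ _ _ _ _ (EFin \o cst (m%:R : R))) => //.
    + exact/measurable_EFinP/measurable_funTS.
    + by move=> y [_ /= f1y]; rewrite lee_fin !ger0_norm.
    + apply/integrableP; split; first exact/measurable_EFinP/measurable_cst.
      under eq_integral do rewrite /= ger0_norm //.
      rewrite integral_cst // (le_lt_trans (y := (m%:R%:E * nu (F n))%E)) //.
        by rewrite lee_wpmul2l ?lee_fin // le_measure ?inE //; [case: (mF n)|move=> y []].
      by rewrite lte_mul_pinfty ?lee_fin //; case: (mF n).
  - exact/measurable_EFinP/measurable_funTS.
apply: (negligibleS (A := \bigcup_n \bigcup_m ~` [set y | B n m y -> f1 y = f2 y])).
  move=> y /= neq; have : setT y by [].
  rewrite UF => -[n _ Fn]; exists n => //; exists (Num.trunc (f1 y)).+1 => //= f12y.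
  by apply: neq; apply: f12y; split => //=; apply: ltW; exact: truncnS_gt.
by apply: negligible_bigcup => n; apply: negligible_bigcup => m; exact: aeB.
Qed.

(* The measure instance of [pushforward m f] depends on a proof of [mf], which
   canonical structure inference cannot supply. *)
Definition pushforward_measure d1 d2 (T1 : measurableType d1)
    (T2 : measurableType d2) (R : realType) (m : {measure set T1 -> \bar R})
    (f : T1 -> T2) (mf : measurable_fun setT f) : {measure set T2 -> \bar R} :=
  ltac:(refine (pushforward m f); exact: mf).

Section borel_measurability.
Context (R : realType) (X : ptopologicalType).
Local Notation T := (borelT X).

Lemma open_measurable_borel (U : set X) : open U -> measurable (U : set T).
Proof. by move=> oU; apply: sub_sigma_algebra. Qed.

Lemma continuous_measurable_borel (h : X -> X) :
  continuous h -> measurable_fun setT (h : T -> T).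
Proof.
move=> ch; apply: (@measurability _ _ T T setT (h : T -> T) (@open X)) => //.
move=> _ [B oB <-]; rewrite setTI; apply: open_measurable_borel.
by apply: open_comp => // y _; exact: ch.
Qed.

Lemma continuous_measurable_borel_real (h : X -> R) :
  continuous h -> measurable_fun setT (h : T -> R).
Proof.
move=> ch; apply: (@measurability _ _ T R setT h (@RGenOpens.G R)).
  exact: RGenOpens.measurableE.
move=> _ [B [a [b ->]] <-]; rewrite setTI; apply: open_measurable_borel.
by apply: open_comp; [move=> y _; exact: ch|exact: itv_open].
Qed.

Lemma Cfun_cmeasurable (f : X -> R[i]) : Cfun f -> cmeasurable (f : T -> R[i]).
Proof. by move=> [? ?]; split; exact: continuous_measurable_borel_real. Qed.

End borel_measurability.

Section koopman_multiplication.
Variables (R : realType) (G : groupType) (X : ptopologicalType) (act : G -> X -> X).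
Hypotheses (cX : compact [set: X]) (gs : gspace act).
Variables (nu : {measure set borelT X -> \bar R}) (D : G -> borelT X -> R).
Hypotheses (nu_sfin : sigma_finite setT nu) (nu_qi : quasi_invariant act nu)
  (rnD : rn_derivative act nu D).
Local Notation T := (borelT X).

Lemma measurable_act g : measurable_fun setT (act g : T -> T).
Proof. by apply: continuous_measurable_borel; exact: act_continuous. Qed.

Lemma measurable_preimage_act g (A : set T) :
  measurable A -> measurable (act g @^-1` A : set T).
Proof. by move=> mA; rewrite -[X in measurable X]setTI; exact: measurable_act. Qed.

Lemma D_ge0 g y : 0 <= D g y.
Proof. by case: (rnD g). Qed.

Lemma measurable_D g : measurable_fun setT (D g).
Proof. by case: (rnD g). Qed.

Lemma measure_preimage_act g (A : set T) : measurable A ->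
  nu (act g @^-1` A) = (\int[nu]_(y in A) (D g y)%:E)%E.
Proof. by case: (rnD g) => _ _; exact. Qed.

(* Binders of almost-everywhere statements must be typed [T], not [X]: the filter
   instance of [{ae nu, _}] is not found over [X]. *)
Lemma ae_act g (P : T -> Prop) :
  {ae nu, forall y, P y} -> {ae nu, forall y : T, P (act g y)}.
Proof.
move=> [N [mN N0 PN]]; exists (act g @^-1` N); split => //.
- exact: measurable_preimage_act.
- exact/(nu_qi g mN).1.
- by move=> y /= nP; apply: PN.
Qed.

Lemma integral_act_density g (psi : T -> \bar R) E : measurable E ->
  (forall y, 0 <= psi y)%E -> measurable_fun setT psi ->
  (\int[nu]_(y in E) (psi y * (D g y)%:E) =
   \int[nu]_(z in act g @^-1` E) psi (act g z))%E.
Proof.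
move=> mE psi0 mpsi; have mg := measurable_act g.
rewrite (@integral_density _ _ _ nu (pushforward_measure nu mg) (D g)) //.
- exact: ge0_integral_pushforward (measurable_funTS mpsi) (fun y _ => psi0 y).
- exact: D_ge0.
- exact: measurable_D.
- by move=> A mA; rewrite /= /pushforward measure_preimage_act.
- exact: measurable_funTS.
Qed.

Lemma integral_koopman g (F : T -> R) : measurable_fun setT F ->
  (\int[nu]_y (F (act g^-1%g y) * D g y)%:E = \int[nu]_y (F y)%:E)%E.
Proof.
move=> mF; set Fe := EFin \o F.
have mFe : measurable_fun setT Fe by exact/measurable_EFinP.
have posE : (fun y => (F (act g^-1%g y) * D g y)%:E)^\+%E =
    (fun y => (Fe^\+ (act g^-1%g y) * (D g y)%:E)%E).
  by apply: funext => y; rewrite !funeposE EFinM maxe_pMl ?mul0e ?lee_fin ?D_ge0.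
have negE : (fun y => (F (act g^-1%g y) * D g y)%:E)^\-%E =
    (fun y => (Fe^\- (act g^-1%g y) * (D g y)%:E)%E).
  apply: funext => y; rewrite !funenegE EFinM -mulNe.
  by rewrite maxe_pMl ?mul0e ?lee_fin ?D_ge0.
rewrite integralE [RHS]integralE posE negE !integral_act_density //.
- rewrite preimage_setT; congr (_ - _)%E;
    by apply: eq_integral => y _; rewrite (actK gs).
all: apply: measurableT_comp (measurable_act _);
  first [exact: measurable_funepos|exact: measurable_funeneg].
Qed.

Lemma Rintegral_koopman g (F : T -> R) : measurable_fun setT F ->
  Rintegral nu setT (fun y => F (act g^-1%g y) * D g y) = Rintegral nu setT F.
Proof. by move=> mF; rewrite /Rintegral integral_koopman. Qed.

Lemma D1_ae : {ae nu, forall y : T, D 1%g y = 1}.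
Proof.
apply: sigma_finite_integral_ae_eq => //; first exact: D_ge0.
- exact: measurable_D.
- move=> A mA; rewrite -measure_preimage_act // integral_cst // mul1e.
  by rewrite (_ : _ @^-1` _ = A) //; apply/seteqP; split => y /=; rewrite (act1 gs).
Qed.

Lemma DM_ae g h : {ae nu, forall y : T, D (g * h)%g y = D h (act g^-1%g y) * D g y}.
Proof.
have mDh : measurable_fun setT (fun y : T => D h (act g^-1%g y)).
  exact: measurableT_comp (measurable_D h) (measurable_act _).
apply: sigma_finite_integral_ae_eq => //; first exact: D_ge0.
- exact: measurable_D.
- exact: measurable_funM (measurable_D g).
- move=> A mA; rewrite -measure_preimage_act //.
  under [RHS]eq_integral do rewrite EFinM.
  rewrite integral_act_density //.
  + under [RHS]eq_integral do rewrite (actK gs).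
    rewrite -measure_preimage_act; last exact: measurable_preimage_act.
    by rewrite (_ : _ @^-1` _ = act h @^-1` (act g @^-1` A)) //;
      apply/seteqP; split => y /=; rewrite (actM gs).
  + by move=> y; rewrite lee_fin D_ge0.
  + exact/measurable_EFinP.
Qed.

Lemma DV_ae g : {ae nu, forall y : T, D g^-1%g (act g^-1%g y) * D g y = 1}.
Proof. by apply: filterS2 (DM_ae g g^-1%g) D1_ae => y; rewrite mulgV => <-. Qed.

Lemma D_fixset_ae g (U : set T) : measurable U ->
  U `<=` Defs.fixset act g -> {ae nu, forall y : T, U y -> D g y = 1}.
Proof.
move=> mU Ufix.
have fixAU A : act g @^-1` (A `&` U) = A `&` U.
  apply/seteqP; split => y [Ay Uy]; last by rewrite /preimage /= Ufix.
  by rewrite -(can_inj (actK gs g) (Ufix _ Uy)).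
suff : {ae nu, forall y : T, D g y * \1_U y = \1_U y}.
  by apply: filterS => y + Uy; rewrite indicE mem_set // mulr1.
apply: sigma_finite_integral_ae_eq => //.
- by move=> y; rewrite mulr_ge0 ?D_ge0.
- by apply: measurable_funM; [exact: measurable_D|exact: measurable_indic].
- move=> A mA; rewrite integral_indic // setIC.
  rewrite (_ : (fun y => _) = (EFin \o D g) \_ U); last first.
    by rewrite epatch_indic; apply: funext => y; rewrite /= EFinM.
  by rewrite -integral_mkcondr -measure_preimage_act ?fixAU //; exact: measurableI.
Qed.

Lemma cmeasurable_koopman g xi : cmeasurable xi -> cmeasurable (koopman act D g xi).
Proof.
move=> mxi; apply: cmeasurableM; last exact: cmeasurable_comp (measurable_act _) mxi.
split; last exact: measurable_cst.
exact: measurableT_comp (continuous_measurable_fun (@sqrt_continuous R)) (measurable_D g).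
Qed.

Lemma integral_cabs2_koopman g xi : cmeasurable xi ->
  (\int[nu]_y (cabs2 (koopman act D g xi y))%:E = \int[nu]_y (cabs2 (xi y))%:E)%E.
Proof.
move=> mxi; rewrite -(integral_koopman g (measurable_cabs2 mxi)).
by apply: eq_integral => y _; rewrite cabs2_sqrt_scale ?D_ge0 // mulrC.
Qed.

Lemma koopman_bounded g : bounded_op nu (koopman act D g).
Proof.
split.
- move=> xi Lxi; have [mxi _] := Lxi.
  apply: L2_of_integral_cabs2 (cmeasurable_koopman g mxi) Lxi _.
  exact: integral_cabs2_koopman.
- move=> xi eta _ _ xi_eta; apply: filterS (ae_act g^-1%g xi_eta) => y /= xi_eta_y _.
  by rewrite /koopman xi_eta_y.
- by move=> a xi eta _ _; apply: L2eq_of_eq => y; rewrite /koopman; ring.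
- by exists 1 => xi [mxi _]; rewrite mul1r /L2norm2 /Rintegral integral_cabs2_koopman.
Qed.

Lemma koopman_adjoint g : adjoint_of nu (koopman act D g) (koopman act D g^-1%g).
Proof.
move=> xi eta [mxi _] [meta _].
have [mRe mIm] := cmeasurableM mxi (cmeasurable_conj (cmeasurable_koopman g^-1%g meta)).
have [mRe' mIm'] := cmeasurableM (cmeasurable_koopman g mxi) (cmeasurable_conj meta).
have mDg := measurable_D g; have mgV := measurable_act g^-1%g.
rewrite /L2ip; congr Complex; rewrite -[RHS](Rintegral_koopman g) //;
  (apply: Rintegral_ae_eq => //; first by apply: measurable_funM => //;
    first [exact: measurableT_comp mRe mgV|exact: measurableT_comp mIm mgV]);
  apply: filterS (DV_ae g) => y DV1;
  rewrite /koopman invgK (actKV gs) -(sqrt_mul_inv (D_ge0 _ _) (D_ge0 _ _) DV1);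
  by case: (xi _) => a b; case: (eta y) => c e /=; ring.
Qed.

Lemma koopman1 : op_eq nu (koopman act D 1%g) id.
Proof.
move=> xi _; apply: filterS D1_ae => y D1y _.
by rewrite /koopman D1y sqrtr1 invg1 (act1 gs) mul1r.
Qed.

Lemma koopmanM g h :
  op_eq nu (koopman act D (g * h)%g) (koopman act D g \o koopman act D h).
Proof.
move=> xi _; apply: filterS (DM_ae g h) => y DMy _.
by rewrite /koopman /= DMy sqrtrM ?D_ge0 // rmorphM invgM (actM gs); ring.
Qed.

Lemma mult_op_star_hom : unital_star_hom nu (@mult_op X R).
Proof. exact: unital_star_hom_comp cX (fun f Cf => Cfun_cmeasurable Cf). Qed.

Lemma koopman_covariant g f : Cfun f -> op_eq nu (mult_op (Defs.fact act g f))
  (koopman act D g \o mult_op f \o koopman act D g^-1%g).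
Proof.
move=> _ xi _; apply: filterS (DV_ae g) => y DV1 _.
rewrite /= /mult_op /koopman /Defs.fact invgK (actKV gs).
have sqrtDV : (Num.sqrt (D g y))%:C * (Num.sqrt (D g^-1%g (act g^-1%g y)))%:C = 1.
  by rewrite -rmorphM -sqrtrM ?D_ge0 // mulrC DV1 sqrtr1.
by rewrite -[LHS]mul1r -sqrtDV; ring.
Qed.

Lemma koopman_germinal g f : Cfun f -> supp f `<=` Defs.fixset act g ->
  op_eq nu (koopman act D g \o mult_op f) (mult_op f).
Proof.
move=> Cf fix_f xi _.
have Dg1 := D_fixset_ae (open_measurable_borel (Cfun_open_neq0 Cf))
  (fun y => fixset_supp fix_f).
apply: filterS Dg1 => y Dg1y _; rewrite /= /mult_op /koopman (supp_fixset_actV gs) //.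
have [->|fy] := eqVneq (f y) 0; first by rewrite !mul0r mulr0.
have gVy : act g^-1%g y = y by rewrite -{1}(fixset_supp fix_f fy) (actK gs).
by rewrite (Dg1y fy) sqrtr1 mul1r gVy.
Qed.

Theorem germinal_koopman_mult_op : germinal_rep act nu (koopman act D) (@mult_op X R).
Proof.
apply: germinal_rep_intro.
- exact: koopman_bounded.
- exact: koopman_adjoint.
- exact: koopman1.
- exact: koopmanM.
- exact: mult_op_star_hom.
- exact: koopman_covariant.
- exact: koopman_germinal.
Qed.

End koopman_multiplication.

Theorem mainTheorem19 (R : realType) (G : groupType) (X : ptopologicalType)
    (act : G -> X -> X) :
  hausdorff_space X -> compact [set: X] -> gspace act ->
  (* (i) Koopman representation with multiplication operators *)
  (forall (nu : {measure set borelT X -> \bar R}) (D : G -> borelT X -> R),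
      sigma_finite setT nu -> quasi_invariant act nu ->
      rn_derivative act nu D ->
      germinal_rep act nu (koopman act D) (@mult_op X R))
  /\
  (* (ii) quasi-regular representation with the Poisson map *)
  (forall (x : X) (H : set G),
      subgroup H -> stab0 act x `<=` H -> H `<=` stab act x ->
      germinal_rep act (cosetmeas R H) (@quasi_reg R G) (poisson act x)).
Proof.
move=> _ cX gs; split.
- by move=> nu D nu_sfin nu_qi rnD; exact: germinal_koopman_mult_op.
- by move=> x H sgH stab0_sub sub_stab; exact: germinal_quasi_reg_poisson.
Qed.
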